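(* Let $G$ be a pseudo-Boolean formula and $\omega$ a substitution with $\mathrm{supp}(\omega)\subseteq\mathrm{var}(G)$. Let $\vec a$ be a list of variables with $\vec a\cap\mathrm{var}(G)=\emptyset$, let $\vec z$ be a list of $n$ variables disjoint from $\vec a$, and let $\mathcal{O}(\vec u,\vec v,\vec a)$, $\mathcal{S}(\vec u,\vec v,\vec a)$ be formulas such that $\mathcal{S}$ is a specification over $\vec a$ and the relation $\preceq$ defined by $\mathcal{O}$ and $\mathcal{S}$ is a preorder. Then: 1. If $G\cup\mathcal{S}(\vec z{\upharpoonright}_\omega,\vec z,\vec a)\vdash\mathcal{O}(\vec z{\upharpoonright}_\omega,\vec z,\vec a)$, then for each assignment $\alpha$ satisfying $G$, $\alpha\circ\omega\preceq\alpha$ holds. 2. If $G\cup\mathcal{S}(\vec z,\vec z{\upharpoonright}_\omega,\vec a)\cup\mathcal{O}(\vec z,\vec z{\upharpoonright}_\omega,\vec a)\vdash\bot$, then for each assignment $\alpha$ satisfying $G$, $\alpha\not\preceq\alpha\circ\omega$ holds.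
   Context: A literal is $x$ or $\bar x=1-x$; a PB constraint is $\sum_i a_i\ell_i\ge A$; a formula is a set of PB constraints; $\bot$ is $0\ge1$; $\mathrm{var}(G)$ is the set of variables of $G$. A substitution $\omega$ maps variables to $0,1$ or literals, extended by $\omega(\bar x)=\overline{\omega(x)}$; $\mathrm{supp}(\omega)=\{x:\omega(x)\ne x\}$; $\vec z{\upharpoonright}_\omega=\omega(z_1),\dots,\omega(z_n)$; $(\alpha\circ\omega)(x)=\alpha(\omega(x))$. For a formula $F(\vec u,\vec v,\vec a)$, $F(\vec w,\vec w',\vec a)$ denotes substitution of $\vec w,\vec w'$ for $\vec u,\vec v$. $\vdash$ denotes cutting planes derivability (sound). Assignments are total on the non-auxiliary variables under consideration (including $\vec z$ and $\mathrm{var}(G)$) and need not assign $\vec a$. A formula $\mathcal{S}(\vec x,\vec a)=\{C_1,\dots,C_m\}$ is a specification over $\vec a$ if there are substitutions $\omega_i$ with $\mathrm{supp}(\omega_i)\subseteq\vec a$ such that $\{C_1,\dots,C_{i-1},\neg C_i\}\vdash\{C_1{\upharpoonright}_{\omega_i},\dots,C_i{\upharpoonright}_{\omega_i}\}$ for each $i$, where $\neg(\sum a_i\ell_i\ge A)$ is $\sum a_i\bar\ell_i\ge\sum a_i-A+1$. The relation $\preceq$ defined by $\mathcal{O},\mathcal{S}$ on assignments $\alpha,\beta$: $\alpha\preceq\beta$ iff there is an assignment $\rho$ to $\vec a$ such that $\mathcal{S}(\vec z{\upharpoonright}_\alpha,\vec z{\upharpoonright}_\beta,\vec a{\upharpoonright}_\rho)\wedge\mathcal{O}(\vec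 z{\upharpoonright}_\alpha,\vec z{\upharpoonright}_\beta,\vec a{\upharpoonright}_\rho)$ is true. *)

From Stdlib Require Import ZArith List.
Import ListNotations.
Open Scope Z_scope.

Inductive lit (V : Type) : Type := Pos (x : V) | Neg (x : V).
Arguments Pos {V} x.
Arguments Neg {V} x.

Inductive term (V : Type) : Type := Const (b : bool) | Lit (l : lit V).
Arguments Const {V} b.
Arguments Lit {V} l.

Definition lit_var {V} (l : lit V) : V := match l with Pos x => x | Neg x => x end.
Definition negl {V} (l : lit V) : lit V := match l with Pos x => Neg x | Neg x => Pos x end.
Definition neg_term {V} (t : term V) : term V :=
  match t with Const b => Const (negb b) | Lit l => Lit (negl l) end.

(** A PB constraint  sum_i a_i l_i >= A  is (list of (a_i, l_i), A). *)
Definition constraint (V : Type) : Type := (list (Z * lit V) * Z)%type.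
Definition formula (V : Type) : Type := list (constraint V).

Definition bot {V} : constraint V := ([], 1).

Definition eval_lit {V} (alpha : V -> bool) (l : lit V) : bool :=
  match l with Pos x => alpha x | Neg x => negb (alpha x) end.
Definition eval_term {V} (alpha : V -> bool) (t : term V) : bool :=
  match t with Const b => b | Lit l => eval_lit alpha l end.

Definition lhs {V} (alpha : V -> bool) (ts : list (Z * lit V)) : Z :=
  fold_right (fun p s => fst p * Z.b2z (eval_lit alpha (snd p)) + s) 0 ts.
Definition sat_c {V} (alpha : V -> bool) (C : constraint V) : Prop :=
  snd C <= lhs alpha (fst C).
Definition sat_f {V} (alpha : V -> bool) (F : formula V) : Prop :=
  Forall (sat_c alpha) F.

Definition coeff_sum {V} (ts : list (Z * lit V)) : Z := fold_right (fun p s => fst p + s) 0 ts.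
Definition negate {V} (C : constraint V) : constraint V :=
  (map (fun p => (fst p, negl (snd p))) (fst C), coeff_sum (fst C) - snd C + 1).

(** Substitutions  sigma : V -> term W, extended by sigma(~x) = ~sigma(x).
    Constant literals are moved to the degree. *)
Definition subst_lit {V W} (sigma : V -> term W) (l : lit V) : term W :=
  match l with Pos x => sigma x | Neg x => neg_term (sigma x) end.

Fixpoint subst_terms {V W} (sigma : V -> term W) (ts : list (Z * lit V))
  : list (Z * lit W) * Z :=
  match ts with
  | [] => ([], 0)
  | p :: r =>
      let (ts', c) := subst_terms sigma r in
      match subst_lit sigma (snd p) with
      | Const b => (ts', fst p * Z.b2z b + c)
      | Lit l' => ((fst p, l') :: ts', c)
      end
  end.

Definition subst_c {V W} (sigma : V -> term W) (C : constraint V) : constraint W :=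
  let (ts, c) := subst_terms sigma (fst C) in (ts, snd C - c).
Definition subst_f {V W} (sigma : V -> term W) (F : formula V) : formula W :=
  map (subst_c sigma) F.

Definition occurs {V} (x : V) (F : formula V) : Prop :=
  exists C, In C F /\ exists p, In p (fst C) /\ lit_var (snd p) = x.

Definition term_mentions {V} (t : term V) (y : V) : Prop :=
  match t with Const _ => False | Lit l => lit_var l = y end.

Definition compose_assign {V} (alpha : V -> bool) (omega : V -> term V) : V -> bool :=
  fun x => eval_term alpha (omega x).

(** Cutting planes.  [same_affine] is the syntactic identification of
    linear forms modulo  ~x = 1 - x  (used for normalising constraints). *)
Definition litval {V} (f : V -> Z) (l : lit V) : Z :=
  match l with Pos x => f x | Neg x => 1 - f x end.
Definition aff {V} (f : V -> Z) (C : constraint V) : Z :=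
  fold_right (fun p s => fst p * litval f (snd p) + s) 0 (fst C) - snd C.
Definition same_affine {V} (C D : constraint V) : Prop :=
  forall f : V -> Z, aff f C = aff f D.

Definition ceil_div (a c : Z) : Z := (a + c - 1) / c.

Inductive cp_deriv {V} (F : formula V) : constraint V -> Prop :=
| cp_axiom C : In C F -> cp_deriv F C
| cp_litax l : cp_deriv F ([(1, l)], 0)
| cp_add C D : cp_deriv F C -> cp_deriv F D ->
    cp_deriv F (fst C ++ fst D, snd C + snd D)
| cp_mul c C : 0 < c -> cp_deriv F C ->
    cp_deriv F (map (fun p => (c * fst p, snd p)) (fst C), c * snd C)
| cp_div c C : 0 < c -> (forall p, In p (fst C) -> 0 <= fst p) -> cp_deriv F C ->
    cp_deriv F (map (fun p => (ceil_div (fst p) c, snd p)) (fst C), ceil_div (snd C) c)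
| cp_equiv C D : same_affine C D -> cp_deriv F C -> cp_deriv F D.

Definition derives {V} (F G : formula V) : Prop := forall C, In C G -> cp_deriv F C.
Definition refutes {V} (F : formula V) : Prop := cp_deriv F bot.

(** Template formulas F(u, v, a): variables are placeholders u_i, v_i, a_j. *)
Inductive tvar : Type := TU (i : nat) | TV (i : nat) | TA (j : nat).

Definition wf_template (n k : nat) (F : formula tvar) : Prop :=
  forall C p, In C F -> In p (fst C) ->
    match lit_var (snd p) with
    | TU i => (i < n)%nat | TV i => (i < n)%nat | TA j => (j < k)%nat
    end.

Definition tinst {W} (wu wv wa : list (term W)) : tvar -> term W :=
  fun x => match x with
           | TU i => nth i wu (Const false)
           | TV i => nth i wv (Const false)
           | TA j => nth j wa (Const false)
           end.
Definition inst {W} (F : formula tvar) (wu wv wa : list (term W)) : formula W :=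
  subst_f (tinst wu wv wa) F.

Definition vars_as_terms (xs : list nat) : list (term nat) := map (fun x => Lit (Pos x)) xs.
Definition restr_subst (xs : list nat) (omega : nat -> term nat) : list (term nat) :=
  map omega xs.
Definition restr_assign (xs : list nat) (alpha : nat -> bool) : list (term Empty_set) :=
  map (fun x => @Const Empty_set (alpha x)) xs.

Definition no_vars : Empty_set -> bool := fun e => match e with end.

(** Specification over a: S = [C_1; ...; C_m] (template), for each i there
    is omega_i with supp in a such that
    {C_1..C_{i-1}, neg C_i} |- {C_1|omega_i, ..., C_i|omega_i}.
    (index i here is 0-based.) *)
Definition is_specification (Sp : formula tvar) : Prop :=
  forall i, (i < length Sp)%nat ->
    exists omega_i : tvar -> term tvar,
      (forall x, omega_i x <> Lit (Pos x) -> exists j, x = TA j) /\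
      derives (firstn i Sp ++ [negate (nth i Sp bot)])
              (subst_f omega_i (firstn (S i) Sp)).

Definition preceq (Ob Sp : formula tvar) (z a : list nat) (alpha beta : nat -> bool) : Prop :=
  exists rho : nat -> bool,
    sat_f no_vars (inst Sp (restr_assign z alpha) (restr_assign z beta) (restr_assign a rho)) /\
    sat_f no_vars (inst Ob (restr_assign z alpha) (restr_assign z beta) (restr_assign a rho)).

Definition is_preorder {T} (R : T -> T -> Prop) : Prop :=
  (forall x, R x x) /\ (forall x y w, R x y -> R y w -> R x w).

(* Both parts are soundness arguments.  For part 1, take a model alpha of G
   and change it only on the fresh variables a so that S(z|omega, z, a)
   becomes true; this is possible because a specification can always be
   satisfied by changing only its auxiliary variables (a violated C_i is
   repaired by omega_i, whose support lies in a, without breaking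
   C_1, ..., C_(i-1)).  The derivation then makes O(z|omega, z, a) true, and
   the new values on a witness alpha o omega <= alpha.  For part 2, a witness
   rho of alpha <= alpha o omega, glued to alpha on a, would satisfy the
   refuted formula. *)
From Stdlib Require Import ZArith List Lia Classical.
Import ListNotations.
Open Scope Z_scope.

Definition assign_comp {V W} (alpha : W -> bool) (sigma : V -> term W) : V -> bool :=
  fun x => eval_term alpha (sigma x).

Lemma eval_neg_term {W} (alpha : W -> bool) (t : term W) :
  eval_term alpha (neg_term t) = negb (eval_term alpha t).
Proof. destruct t as [b | [x | x]]; simpl; [| | destruct (alpha x)]; reflexivity. Qed.

Lemma eval_subst_lit {V W} (alpha : W -> bool) (sigma : V -> term W) (l : lit V) :
  eval_term alpha (subst_lit sigma l) = eval_lit (assign_comp alpha sigma) l.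
Proof. destruct l; simpl; [| apply eval_neg_term]; reflexivity. Qed.

Lemma lhs_subst_terms {V W} (alpha : W -> bool) (sigma : V -> term W) (ts : list (Z * lit V)) :
  lhs alpha (fst (subst_terms sigma ts)) + snd (subst_terms sigma ts)
  = lhs (assign_comp alpha sigma) ts.
Proof.
  induction ts as [| p ts IH]; simpl; [reflexivity |].
  destruct (subst_terms sigma ts) as [ts' c]; simpl in IH.
  rewrite <- eval_subst_lit.
  destruct (subst_lit sigma (snd p)); unfold lhs in *; simpl in *; lia.
Qed.

Lemma sat_subst_c {V W} (alpha : W -> bool) (sigma : V -> term W) (C : constraint V) :
  sat_c alpha (subst_c sigma C) <-> sat_c (assign_comp alpha sigma) C.
Proof.
  unfold sat_c, subst_c. rewrite <- lhs_subst_terms.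
  destruct (subst_terms sigma (fst C)); simpl. lia.
Qed.

Lemma sat_subst_f {V W} (alpha : W -> bool) (sigma : V -> term W) (F : formula V) :
  sat_f alpha (subst_f sigma F) <-> sat_f (assign_comp alpha sigma) F.
Proof.
  unfold sat_f, subst_f. rewrite Forall_map.
  split; apply Forall_impl; intro; apply sat_subst_c.
Qed.

Lemma sat_f_app {V} (alpha : V -> bool) (F1 F2 : formula V) :
  sat_f alpha (F1 ++ F2) <-> sat_f alpha F1 /\ sat_f alpha F2.
Proof. apply Forall_app. Qed.

Lemma lhs_ext {V} (b b' : V -> bool) (ts : list (Z * lit V)) :
  (forall p, In p ts -> b (lit_var (snd p)) = b' (lit_var (snd p))) ->
  lhs b ts = lhs b' ts.
Proof.
  induction ts as [| p ts IH]; intros Hagree; [reflexivity |].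
  unfold lhs in *; simpl.
  rewrite IH by (intros; apply Hagree; right; assumption).
  specialize (Hagree p (or_introl eq_refl)).
  destruct (snd p); simpl in *; rewrite Hagree; reflexivity.
Qed.

Lemma sat_f_ext_occurs {V} (b b' : V -> bool) (F : formula V) :
  (forall x, occurs x F -> b x = b' x) -> sat_f b F -> sat_f b' F.
Proof.
  intros Hagree HF. apply Forall_forall. intros C HC. unfold sat_c.
  rewrite (lhs_ext b' b); [exact (proj1 (Forall_forall _ _) HF C HC) |].
  intros p Hp. symmetry. apply Hagree. exists C. eauto.
Qed.

Lemma sat_f_ext {V} (b b' : V -> bool) (F : formula V) :
  (forall x, b x = b' x) -> sat_f b F -> sat_f b' F.
Proof. intros Hagree. apply sat_f_ext_occurs. auto. Qed.

Lemma eval_term_ext {W} (b b' : W -> bool) (t : term W) :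
  (forall y, term_mentions t y -> b y = b' y) -> eval_term b t = eval_term b' t.
Proof. destruct t as [| [x | x]]; simpl; intros Hagree; rewrite ?Hagree; reflexivity. Qed.

Lemma lhs_app {V} (alpha : V -> bool) (ts1 ts2 : list (Z * lit V)) :
  lhs alpha (ts1 ++ ts2) = lhs alpha ts1 + lhs alpha ts2.
Proof. induction ts1; unfold lhs in *; simpl; lia. Qed.

Lemma lhs_scale {V} (alpha : V -> bool) (c : Z) (ts : list (Z * lit V)) :
  lhs alpha (map (fun p => (c * fst p, snd p)) ts) = c * lhs alpha ts.
Proof. induction ts; unfold lhs in *; simpl; lia. Qed.

Lemma le_mul_ceil_div (a c : Z) : 0 < c -> a <= c * ceil_div a c.
Proof.
  intros Hc. unfold ceil_div.
  pose proof (Z.div_mod (a + c - 1) c ltac:(lia)).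
  pose proof (Z.mod_pos_bound (a + c - 1) c Hc). lia.
Qed.

Lemma ceil_div_le (a c x : Z) : 0 < c -> a <= c * x -> ceil_div a c <= x.
Proof.
  intros Hc Ha. unfold ceil_div.
  enough ((a + c - 1) / c < x + 1) by lia.
  apply Z.div_lt_upper_bound; lia.
Qed.

Lemma lhs_le_scale_ceil_div {V} (alpha : V -> bool) (c : Z) (ts : list (Z * lit V)) :
  0 < c -> lhs alpha ts <= c * lhs alpha (map (fun p => (ceil_div (fst p) c, snd p)) ts).
Proof.
  intros Hc. induction ts as [| p ts IH]; unfold lhs in *; simpl; [lia |].
  pose proof (le_mul_ceil_div (fst p) c Hc).
  destruct (eval_lit alpha (snd p)); simpl; lia.
Qed.

Lemma aff_b2z {V} (alpha : V -> bool) (C : constraint V) :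
  aff (fun x => Z.b2z (alpha x)) C = lhs alpha (fst C) - snd C.
Proof.
  unfold aff, lhs. f_equal.
  induction (fst C) as [| p ts IH]; simpl; [reflexivity |].
  rewrite IH. destruct (snd p) as [x | x]; simpl; [| destruct (alpha x)]; reflexivity.
Qed.

Lemma cp_sound {V} (F : formula V) (C : constraint V) (alpha : V -> bool) :
  cp_deriv F C -> sat_f alpha F -> sat_c alpha C.
Proof.
  intros Hder HF. induction Hder; unfold sat_c in *; simpl.
  - exact (proj1 (Forall_forall _ _) HF C H).
  - unfold lhs; simpl. destruct (eval_lit alpha l); simpl; lia.
  - rewrite lhs_app. lia.
  - rewrite lhs_scale. nia.
  - apply ceil_div_le; [assumption |].
    pose proof (lhs_le_scale_ceil_div alpha c (fst C) H). lia.
  - pose proof (H (fun x => Z.b2z (alpha x))) as Haff. rewrite !aff_b2z in Haff. lia.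
Qed.

Lemma refutes_unsat {V} (F : formula V) (alpha : V -> bool) :
  refutes F -> ~ sat_f alpha F.
Proof.
  intros Href HF. pose proof (cp_sound F bot alpha Href HF) as Hbot.
  unfold sat_c, bot, lhs in Hbot. simpl in Hbot. lia.
Qed.

Lemma negate_sat {V} (alpha : V -> bool) (C : constraint V) :
  ~ sat_c alpha C -> sat_c alpha (negate C).
Proof.
  unfold sat_c, negate. destruct C as [ts A]; simpl. intros Hviol.
  enough (lhs alpha (map (fun p => (fst p, negl (snd p))) ts) = coeff_sum ts - lhs alpha ts)
    by lia.
  clear Hviol. induction ts as [| p ts IH]; unfold lhs in *; simpl; [reflexivity |].
  rewrite IH. destruct (snd p) as [x | x]; simpl; destruct (alpha x); simpl; lia.
Qed.

Lemma firstn_S_nth {T} (l : list T) (k : nat) (d : T) :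
  (k < length l)%nat -> firstn (S k) l = firstn k l ++ [nth k l d].
Proof.
  revert k; induction l as [| x l IH]; intros [| k] Hk; simpl in *; try lia;
    [reflexivity | rewrite (IH k) by lia; reflexivity].
Qed.

Lemma assign_comp_off_supp {V} (b : V -> bool) (sigma : V -> term V) (x : V) :
  sigma x = Lit (Pos x) -> assign_comp b sigma x = b x.
Proof. unfold assign_comp. intros ->. reflexivity. Qed.

Lemma spec_prefix_extend (Sp : formula tvar) (b0 : tvar -> bool) :
  is_specification Sp -> forall k, (k <= length Sp)%nat ->
  exists b, sat_f b (firstn k Sp) /\
            forall i, b (TU i) = b0 (TU i) /\ b (TV i) = b0 (TV i).
Proof.
  intros Hspec k. induction k as [| k IH]; intros Hk.
  - exists b0. split; [constructor | auto].
  - destruct IH as [b [Hsat Hagree]]; [lia |].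
    rewrite (firstn_S_nth Sp k bot) by lia.
    destruct (classic (sat_c b (nth k Sp bot))) as [Hk_sat | Hk_viol].
    + exists b. split; [apply sat_f_app; split; [| constructor] |]; auto.
    + destruct (Hspec k ltac:(lia)) as [omega_k [Hsupp Hder]].
      assert (Hrepair : sat_f b (subst_f omega_k (firstn (S k) Sp))).
      { apply Forall_forall. intros C HC. eapply cp_sound; [apply Hder, HC |].
        apply sat_f_app. split; [| constructor]; auto using negate_sat. }
      rewrite sat_subst_f, (firstn_S_nth Sp k bot) in Hrepair by lia.
      exists (assign_comp b omega_k). split; [exact Hrepair |].
      assert (Hfix : forall x, (forall j, x <> TA j) -> omega_k x = Lit (Pos x)).
      { intros x Hx. apply NNPP. intros Hmoved.
        destruct (Hsupp x Hmoved) as [j ->]. exact (Hx j eq_refl). }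
      intros i. rewrite !assign_comp_off_supp by (apply Hfix; discriminate).
      apply Hagree.
Qed.

Lemma spec_extend (Sp : formula tvar) (b0 : tvar -> bool) :
  is_specification Sp ->
  exists b, sat_f b Sp /\ forall i, b (TU i) = b0 (TU i) /\ b (TV i) = b0 (TV i).
Proof.
  intros Hspec.
  destruct (spec_prefix_extend Sp b0 Hspec (length Sp) (le_n _)) as [b Hb].
  rewrite firstn_all in Hb. eauto.
Qed.

Lemma eval_nth_map {W1 W2} (e1 : W1 -> bool) (e2 : W2 -> bool)
    (f1 : nat -> term W1) (f2 : nat -> term W2) (l : list nat) (i : nat) :
  (forall x, In x l -> eval_term e1 (f1 x) = eval_term e2 (f2 x)) ->
  eval_term e1 (nth i (map f1 l) (Const false)) = eval_term e2 (nth i (map f2 l) (Const false)).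
Proof.
  revert i; induction l as [| x l IH]; intros [| i] Hagree; simpl;
    auto using in_eq, in_cons.
Qed.

Lemma sat_inst_map_ext {W1 W2} (e1 : W1 -> bool) (e2 : W2 -> bool) (F : formula tvar)
    (lu lv la : list nat) (fu fv fa : nat -> term W1) (gu gv ga : nat -> term W2) :
  (forall x, In x lu -> eval_term e1 (fu x) = eval_term e2 (gu x)) ->
  (forall x, In x lv -> eval_term e1 (fv x) = eval_term e2 (gv x)) ->
  (forall x, In x la -> eval_term e1 (fa x) = eval_term e2 (ga x)) ->
  sat_f e1 (inst F (map fu lu) (map fv lv) (map fa la)) ->
  sat_f e2 (inst F (map gu lu) (map gv lv) (map ga la)).
Proof.
  intros Hu Hv Ha. unfold inst. rewrite !sat_subst_f.
  apply sat_f_ext. intros [i | i | j]; apply eval_nth_map; assumption.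
Qed.

Fixpoint index_of (y : nat) (l : list nat) : nat :=
  match l with
  | [] => O
  | x :: l => if Nat.eq_dec x y then O else S (index_of y l)
  end.

Lemma index_of_nth (l : list nat) (j : nat) :
  NoDup l -> (j < length l)%nat -> index_of (nth j l 0%nat) l = j.
Proof.
  revert j; induction l as [| x l IH]; intros j Hnd Hj; simpl in *; [lia |].
  inversion Hnd as [| ? ? Hx Hnd']; subst.
  destruct j as [| j]; destruct (Nat.eq_dec x _) as [Heq | Hne]; try congruence.
  - exfalso. apply Hx. rewrite Heq. apply nth_In. lia.
  - rewrite IH by (assumption || lia). reflexivity.
Qed.

Definition override (a : list nat) (rho alpha : nat -> bool) : nat -> bool :=
  fun y => if in_dec Nat.eq_dec y a then rho y else alpha y.

Lemma override_in a rho alpha y : In y a -> override a rho alpha y = rho y.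
Proof. unfold override. destruct (in_dec _ y a); tauto. Qed.

Lemma override_notin a rho alpha y : ~ In y a -> override a rho alpha y = alpha y.
Proof. unfold override. destruct (in_dec _ y a); tauto. Qed.

Section Lemma3.

Variables (G : formula nat) (omega : nat -> term nat) (a z : list nat) (Ob Sp : formula tvar).

Hypothesis omega_avoids_a :
  forall x y, omega x <> Lit (Pos x) -> term_mentions (omega x) y -> ~ In y a.
Hypothesis a_fresh_for_G : forall x, In x a -> ~ occurs x G.
Hypothesis z_disjoint_a : forall x, In x z -> ~ In x a.

Lemma eval_omega_override (rho alpha : nat -> bool) (x : nat) :
  In x z -> eval_term (override a rho alpha) (omega x) = eval_term alpha (omega x).
Proof.
  intros Hx. apply eval_term_ext. intros y Hy. apply override_notin.
  destruct (classic (omega x = Lit (Pos x))) as [Hfix | Hmoved].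
  - rewrite Hfix in Hy. simpl in Hy. subst y. auto.
  - exact (omega_avoids_a x y Hmoved Hy).
Qed.

Lemma sat_G_override (rho alpha : nat -> bool) :
  sat_f alpha G -> sat_f (override a rho alpha) G.
Proof.
  apply sat_f_ext_occurs. intros x Hx. symmetry. apply override_notin.
  intros Ha. exact (a_fresh_for_G x Ha Hx).
Qed.

Lemma preceq_comp_of_derives :
  NoDup a -> wf_template (length z) (length a) Sp -> is_specification Sp ->
  derives (G ++ inst Sp (restr_subst z omega) (vars_as_terms z) (vars_as_terms a))
          (inst Ob (restr_subst z omega) (vars_as_terms z) (vars_as_terms a)) ->
  forall alpha, sat_f alpha G -> preceq Ob Sp z a (compose_assign alpha omega) alpha.
Proof.
  intros Hnd Hwf Hspec Hder alpha HG.
  set (sigma := tinst (restr_subst z omega) (vars_as_terms z) (vars_as_terms a)).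
  destruct (spec_extend Sp (assign_comp alpha sigma) Hspec) as [b [HbS Hagree]].
  set (g := override a (fun y => b (TA (index_of y a))) alpha).
  assert (HgS : sat_f g (inst Sp (restr_subst z omega) (vars_as_terms z) (vars_as_terms a))).
  { unfold inst. apply sat_subst_f. revert HbS. apply sat_f_ext_occurs.
    intros x [C [HC [p [Hp Hx]]]]. specialize (Hwf C p HC Hp). rewrite Hx in Hwf.
    destruct x as [i | i | j]; unfold assign_comp, sigma; simpl.
    - rewrite (proj1 (Hagree i)). apply eval_nth_map. intros. symmetry.
      apply eval_omega_override. assumption.
    - rewrite (proj2 (Hagree i)). apply eval_nth_map. intros. simpl.
      symmetry. apply override_notin. auto.
    - unfold vars_as_terms.
      rewrite (nth_indep _ _ (Lit (Pos 0%nat))) by (rewrite length_map; assumption).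
      rewrite (map_nth (fun x => Lit (Pos x))). simpl. unfold g.
      rewrite override_in by (apply nth_In; assumption).
      rewrite index_of_nth by assumption. reflexivity. }
  assert (HgO : sat_f g (inst Ob (restr_subst z omega) (vars_as_terms z) (vars_as_terms a))).
  { apply Forall_forall. intros C HC. eapply cp_sound; [apply Hder, HC |].
    apply sat_f_app. split; [apply sat_G_override |]; assumption. }
  exists g. subst g. split; [revert HgS | revert HgO]; apply sat_inst_map_ext; simpl; intros x Hx;
    try reflexivity; unfold compose_assign;
    auto using eval_omega_override, override_notin.
Qed.

Lemma not_preceq_comp_of_refutes :
  refutes (G ++ inst Sp (vars_as_terms z) (restr_subst z omega) (vars_as_terms a)
             ++ inst Ob (vars_as_terms z) (restr_subst z omega) (vars_as_terms a)) ->
  forall alpha, sat_f alpha G -> ~ preceq Ob Sp z a alpha (compose_assign alpha omega).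
Proof.
  intros Href alpha HG [rho [HS HO]].
  apply (refutes_unsat _ (override a rho alpha) Href).
  rewrite !sat_f_app. split; [apply sat_G_override; assumption |].
  split; [revert HS | revert HO]; apply sat_inst_map_ext; simpl; intros x Hx;
    unfold compose_assign; symmetry;
    auto using eval_omega_override, override_notin, override_in.
Qed.

End Lemma3.

Theorem lemma3 (G : formula nat) (omega : nat -> term nat) (a z : list nat) (n : nat)
  (Ob Sp : formula tvar) :
  (* supp(omega) is contained in var(G) *)
  (forall x, omega x <> Lit (Pos x) -> occurs x G) ->
  (* omega does not map into the auxiliary variables a (needed so that
     alpha o omega is meaningful for assignments not assigning a) *)
  (forall x y, omega x <> Lit (Pos x) -> term_mentions (omega x) y -> ~ In y a) ->
  NoDup a ->
  (forall x, In x a -> ~ occurs x G) ->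
  length z = n ->
  (forall x, In x z -> ~ In x a) ->
  wf_template n (length a) Ob ->
  wf_template n (length a) Sp ->
  is_specification Sp ->
  is_preorder (preceq Ob Sp z a) ->
  (derives (G ++ inst Sp (restr_subst z omega) (vars_as_terms z) (vars_as_terms a))
           (inst Ob (restr_subst z omega) (vars_as_terms z) (vars_as_terms a)) ->
   forall alpha, sat_f alpha G -> preceq Ob Sp z a (compose_assign alpha omega) alpha)
  /\
  (refutes (G ++ inst Sp (vars_as_terms z) (restr_subst z omega) (vars_as_terms a)
              ++ inst Ob (vars_as_terms z) (restr_subst z omega) (vars_as_terms a)) ->
   forall alpha, sat_f alpha G -> ~ preceq Ob Sp z a alpha (compose_assign alpha omega)).
Proof.
  intros _ Homega Hnd Hfresh Hlen Hdisj _ HwfS Hspec _. subst n.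
  split.
  - exact (preceq_comp_of_derives G omega a z Ob Sp Homega Hfresh Hdisj Hnd HwfS Hspec).
  - exact (not_preceq_comp_of_refutes G omega a z Ob Sp Homega Hfresh Hdisj).
Qed.
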